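(* Let $p=(b,a)_c\in C^1(G_k,\pi/[\pi]_3)$ be a $1$-cocycle, where $(b,a)_c(g)=y^{a(g)}x^{b(g)}[x,y]^{c(g)}$ with $b,a:G_k\to\hat{\mathbb Z}(1)$, $c:G_k\to\hat{\mathbb Z}(2)$. Then in ${\rm H}^2(G_k,\hat{\mathbb Z}(3))$: (1) $\delta_{3,[[x,y],x]}(p)=-\big(b+\frac{\chi-1}{2}\big)\cup c-\binom b2\cup a$; (2) $\delta_{3,[[x,y],y]}(p)=\big(a+\frac{\chi-1}2\big)\cup(ab-c)+\binom a2\cup b-f\cup a$.
   Context: Let $k$ be either a subfield of $\mathbb C$ or the completion of a number field $F\subset\mathbb C$ at a place, with fixed embeddings $\mathbb C\supset\overline{\mathbb Q}\subseteq\overline k$; $\chi$ the cyclotomic character. $\pi=\pi_1^{et}(\mathbb P^1_{\overline k}-\{0,1,\infty\},\overrightarrow{01})\cong\langle x,y\rangle^\wedge$ (profinite free group, $x$ loop around $0$, $y$ loop around $1$), $G_k$-action $\sigma(x)=x^{\chi(\sigma)}$, $\sigma(y)=\mathfrak f(\sigma)^{-1}y^{\chi(\sigma)}\mathfrak f(\sigma)$ with $\mathfrak f:G_k\to[\pi]_2$ a cocycle, and $f:G_k\to\hat{\mathbb Z}(2)$ defined by $\mathfrak f(\sigma)\equiv[x,y]^{f(\sigma)}\bmod[\pi]_3$. $[u,v]=uvu^{-1}v^{-1}$; $[\pi]_n$ lower central series; $\hat{\mathbb Z}(n)$ is $\hat{\mathbb Z}$ with action via $\chi^n$ (with $\hat{\mathbb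 Z}(1)$ identified with $\varprojlim\mu_n$ via $e^{2\pi i/n}$). $\delta_{3,[[x,y],x]},\delta_{3,[[x,y],y]}$ are the components, w.r.t. the basis $[[x,y],x],[[x,y],y]$ of $[\pi]_3/[\pi]_4\cong\hat{\mathbb Z}(3)^2$, of the connecting map of $1\to[\pi]_3/[\pi]_4\to\pi/[\pi]_4\to\pi/[\pi]_3\to1$. $\frac{\chi-1}2$ denotes the cochain $g\mapsto(\chi(g)-1)/2\in\hat{\mathbb Z}(1)$; $ab$ is $g\mapsto a(g)b(g)$; $\binom b2$ is $g\mapsto\binom{b(g)}2$ using profinite binomial coefficients ($\binom am\equiv a_{m!n}(a_{m!n}-1)\cdots(a_{m!n}-m+1)/m!\bmod n$, $a_{m!n}\equiv a\bmod m!n$). Cup product: $(c\cup d)(g,h)=c(g)\,g\cdot d(h)$. *)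

From HB Require Import structures.
From mathcomp Require Import all_boot all_order all_algebra.
From mathcomp Require Import all_classical topology.
Set Implicit Arguments. Unset Strict Implicit. Unset Printing Implicit Defensive.
Import Order.TTheory GRing.Theory Num.Theory.
Local Open Scope ring_scope.

(* Profinite integers  Zhat = lim_n Z/nZ.                                   *)
(* An element is represented by a family  z : nat -> int , where  z n       *)
(* is a representative of the residue modulo  n.+1 .  Equality of Zhat      *)
(* elements is [zeq] (congruence at every level); a representative family   *)
(* is a genuine element of Zhat when it is compatible ([zhat_valid]).       *)
Definition zhat := nat -> int.

Definition zhat_valid (z : zhat) : Prop :=
  forall m n : nat, (m.+1 %| n.+1)%N -> (z n = z m %[mod (m.+1)%:Z])%Z.

Definition zeq (z w : zhat) : Prop :=
  forall n : nat, (z n = w n %[mod (n.+1)%:Z])%Z.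

Definition zadd (z w : zhat) : zhat := fun n => z n + w n.
Definition zopp (z : zhat) : zhat := fun n => - z n.
Definition zsub (z w : zhat) : zhat := fun n => z n - w n.
Definition zmul (z w : zhat) : zhat := fun n => z n * w n.
Definition zexp (z : zhat) (k : nat) : zhat := fun n => z n ^+ k.
Definition zconst (k : int) : zhat := fun _ => k.

Definition zunit (z : zhat) : Prop :=
  forall n : nat, coprimez (z n) (n.+1)%:Z.

(* profinite binomial coefficient  binom(z, 2):  its residue mod N is
   z_{2N} (z_{2N} - 1) / 2 mod N, where z_{2N} represents z mod 2N
   (level 2n+1 has modulus 2(n+1)). *)
Definition zbinom2 (z : zhat) : zhat :=
  fun n => let t := z (2 * n + 1)%N in ((t * (t - 1)) %/ 2)%Z.

(* (u - 1)/2 for a unit u of Zhat (u is odd at every even level, so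
   (u_{2N} - 1)/2 mod N is the residue of (u-1)/2 mod N). *)
Definition zhalf_pred (u : zhat) : zhat :=
  fun n => ((u (2 * n + 1)%N - 1) %/ 2)%Z.

Section Grp.
Context {G : topologicalType} (gmul : G -> G -> G) (ginv : G -> G) (g1 : G).

Definition is_profinite_group : Prop :=
  [/\ (forall x y z, gmul x (gmul y z) = gmul (gmul x y) z),
      (forall x, gmul g1 x = x /\ gmul x g1 = x),
      (forall x, gmul (ginv x) x = g1 /\ gmul x (ginv x) = g1),
      continuous (fun p : G * G => gmul p.1 p.2) /\ continuous ginv &
      [/\ compact [set: G], hausdorff_space G & totally_disconnected [set: G]]].

(* continuity of a map G -> Zhat (Zhat with the inverse limit topology of
   the discrete Z/nZ): every reduction mod n.+1 is locally constant. *)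
Definition zcont (phi : G -> zhat) : Prop :=
  forall (n : nat) (g : G),
    nbhs g (fun g' : G => (phi g' n = phi g n %[mod (n.+1)%:Z])%Z).

Definition cochain1 (phi : G -> zhat) : Prop :=
  (forall g, zhat_valid (phi g)) /\ zcont phi.

Definition is_character (chi : G -> zhat) : Prop :=
  [/\ cochain1 chi, (forall g, zunit (chi g)) &
      (forall g h, zeq (chi (gmul g h)) (zmul (chi g) (chi h)))].

Definition twist (chi : G -> zhat) (j : nat) (g : G) (z : zhat) : zhat :=
  zmul (zexp (chi g) j) z.

Definition cocycle1 (chi : G -> zhat) (j : nat) (phi : G -> zhat) : Prop :=
  cochain1 phi /\
  forall g h, zeq (phi (gmul g h)) (zadd (phi g) (twist chi j g (phi h))).

Definition cobound (chi : G -> zhat) (j : nat) (e : G -> zhat) (g h : G) : zhat :=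
  zadd (zsub (twist chi j g (e h)) (e (gmul g h))) (e g).

Definition cup (chi : G -> zhat) (j : nat) (u w : G -> zhat) (g h : G) : zhat :=
  zmul (u g) (twist chi j g (w h)).

(* two 2-cochains with values in Zhat(j) are cohomologous, i.e. define the
   same class in H^2(G, Zhat(j)) (continuous cochain cohomology) *)
Definition cohomologous2 (chi : G -> zhat) (j : nat) (X Y : G -> G -> zhat) : Prop :=
  exists e : G -> zhat, cochain1 e /\
    forall g h, zeq (X g h) (zadd (Y g h) (cobound chi j e g h)).

End Grp.

(* pi/[pi]_4, pi = free profinite group on x, y.  Every element is uniquely *)
(*   y^a x^b [x,y]^c [[x,y],x]^d [[x,y],y]^e     (a,b,c,d,e in Zhat),        *)
(* with [u,v] = u v u^-1 v^-1.  The group law below is the (Hall) product   *)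
(* formula in these coordinates (checked against the Magnus embedding).     *)
(* pi/[pi]_3 is the quotient forgetting d, e; [pi]_3/[pi]_4 = {(0,0,0,d,e)}. *)
Record N4 := mkN4 { ny : zhat; nx : zhat; nz : zhat; nu : zhat; nv : zhat }.

Definition m4 (p q : N4) : N4 :=
  let: mkN4 a1 b1 c1 d1 e1 := p in
  let: mkN4 a2 b2 c2 d2 e2 := q in
  mkN4 (zadd a1 a2) (zadd b1 b2) (zadd (zadd c1 c2) (zmul a2 b1))
       (zadd (zadd (zadd d1 d2) (zmul c1 b2))
             (zadd (zmul (zmul a2 b1) b2) (zmul a2 (zadd (zbinom2 b1) b1))))
       (zadd (zadd (zadd e1 e2) (zmul c1 a2))
             (zmul b1 (zbinom2 (zadd a2 (zconst 1))))).

Definition inv4 (p : N4) : N4 :=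
  let: mkN4 a b c d e := p in
  mkN4 (zopp a) (zopp b) (zadd (zopp c) (zmul a b))
       (zadd (zadd (zopp d) (zmul c b))
             (zsub (zmul a (zadd (zbinom2 b) b)) (zmul (zmul a b) b)))
       (zsub (zadd (zopp e) (zmul c a)) (zmul b (zbinom2 a))).

Definition comm4 (p q : N4) : N4 := m4 (m4 p q) (m4 (inv4 p) (inv4 q)).

Definition zero5 := zconst 0.
Definition ypow (a : zhat) : N4 := mkN4 a zero5 zero5 zero5 zero5.
Definition xpow (b : zhat) : N4 := mkN4 zero5 b zero5 zero5 zero5.
Definition zpow (c : zhat) : N4 := mkN4 zero5 zero5 c zero5 zero5.

(* Zhat-powers inside the abelian subgroups  y^Zhat.[pi]_3  and  [pi]_2
   (modulo [pi]_4), where w^k is coordinatewise scaling. *)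
Definition pow_yv (k : zhat) (w : N4) : N4 :=
  mkN4 (zmul k (ny w)) zero5 zero5 zero5 (zmul k (nv w)).
Definition pow_xx (k : zhat) (w : N4) : N4 :=
  mkN4 zero5 (zmul k (nx w)) zero5 zero5 zero5.
Definition pow_g2 (k : zhat) (w : N4) : N4 :=
  mkN4 zero5 zero5 (zmul k (nz w)) (zmul k (nu w)) (zmul k (nv w)).

Section Action.
Context {G : Type} (chi f : G -> zhat).

(* sigma(x) = x^chi(sigma);  sigma(y) = ff^-1 y^chi(sigma) ff  where
   ff = frak f(sigma) = [x,y]^f(sigma) mod [pi]_3 (mod [pi]_4 sigma(y) only
   depends on ff mod [pi]_3). *)
Definition sig_x (g : G) : N4 := xpow (chi g).
Definition sig_y (g : G) : N4 := m4 (m4 (inv4 (zpow (f g))) (ypow (chi g))) (zpow (f g)).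

Definition act4 (g : G) (n : N4) : N4 :=
  let X := sig_x g in let Y := sig_y g in
  let Z := comm4 X Y in
  let U := comm4 Z X in let V := comm4 Z Y in
  m4 (m4 (m4 (m4 (pow_yv (ny n) Y) (pow_xx (nx n) X))
             (pow_g2 (nz n) Z)) (pow_g2 (nu n) U)) (pow_g2 (nv n) V).

Definition eq3 (p q : N4) : Prop :=
  [/\ zeq (ny p) (ny q), zeq (nx p) (nx q) & zeq (nz p) (nz q)].

Definition lift_bac (b a c : G -> zhat) (g : G) : N4 :=
  mkN4 (a g) (b g) (c g) zero5 zero5.

End Action.

Section Delta.
Context {G : Type} (gmul : G -> G -> G) (chi f : G -> zhat).

Definition is_pi3_cocycle (b a c : G -> zhat) : Prop :=
  forall g h, eq3 (lift_bac b a c (gmul g h))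
                  (m4 (lift_bac b a c g) (act4 chi f g (lift_bac b a c h))).

(* connecting map of 1 -> [pi]_3/[pi]_4 -> pi/[pi]_4 -> pi/[pi]_3 -> 1:
   delta(p)(g,h) = pt(g) g(pt(h)) pt(gh)^-1  for the lift pt of p;
   its components on the basis [[x,y],x], [[x,y],y]. *)
Definition delta_full (b a c : G -> zhat) (g h : G) : N4 :=
  let pt := lift_bac b a c in
  m4 (m4 (pt g) (act4 chi f g (pt h))) (inv4 (pt (gmul g h))).
Definition delta_xyx (b a c : G -> zhat) (g h : G) : zhat := nu (delta_full b a c g h).
Definition delta_xyy (b a c : G -> zhat) (g h : G) : zhat := nv (delta_full b a c g h).

End Delta.

Definition cadd {G : Type} (u w : G -> zhat) : G -> zhat := fun g => zadd (u g) (w g).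
Definition csub {G : Type} (u w : G -> zhat) : G -> zhat := fun g => zsub (u g) (w g).
Definition cmul {G : Type} (u w : G -> zhat) : G -> zhat := fun g => zmul (u g) (w g).
Definition cbinom2 {G : Type} (u : G -> zhat) : G -> zhat := fun g => zbinom2 (u g).
Definition chalf {G : Type} (chi : G -> zhat) : G -> zhat := fun g => zhalf_pred (chi g).
Definition cadd2 {G : Type} (X Y : G -> G -> zhat) : G -> G -> zhat :=
  fun g h => zadd (X g h) (Y g h).
Definition copp2 {G : Type} (X : G -> G -> zhat) : G -> G -> zhat :=
  fun g h => zopp (X g h).

(* Everything is checked level by level in Zhat = lim Z/N.  On the lift
   y^a x^b [x,y]^c of p, the two components of the connecting map differ from
   the stated cup products by the coboundaries of -b c and b binom(a,2) - a c
   respectively.  After substituting the cocycle relations of p this is a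
   polynomial identity in Z/N, once binomials are expanded with
   binom(u+v,2) = binom(u,2) + binom(v,2) + uv and
   binom(uv,2) = u^2 binom(v,2) + v binom(u,2), the odd unit chi is written
   2 (chi-1)/2 + 1, and the single surviving binomial is eliminated through
   2 binom(t,2) = t(t-1). *)
From HB Require Import structures.
From mathcomp Require Import all_boot all_order all_algebra.
From mathcomp Require Import all_classical topology.
From mathcomp Require Import ring zify.
Import Order.TTheory GRing.Theory Num.Theory.
Local Open Scope ring_scope.

Definition binz2 (t : int) : int := ((t * (t - 1)) %/ 2)%Z.
Definition halfz_pred (t : int) : int := ((t - 1) %/ 2)%Z.
Arguments binz2 : simpl never.
Arguments halfz_pred : simpl never.

Lemma binz2_mul2 t : binz2 t * 2 = t * (t - 1).
Proof.
rewrite /binz2 divzK //; apply/dvdzP.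
have t_eq := divz_eq t 2%Z.
have [t_even | t_odd] : (t %% 2)%Z = 0 \/ (t %% 2)%Z = 1 by lia.
- by exists ((t %/ 2)%Z * (t - 1)); rewrite {1}t_eq t_even; ring.
- by exists ((t %/ 2)%Z * t); rewrite {2}t_eq t_odd; ring.
Qed.

Lemma binz2_eq t k : k * 2 = t * (t - 1) -> binz2 t = k.
Proof. by move=> k2; apply: (@mulIf _ 2) => //; rewrite binz2_mul2 k2. Qed.

Lemma binz2D u v : binz2 (u + v) = binz2 u + binz2 v + u * v.
Proof. by apply: binz2_eq; rewrite !mulrDl !binz2_mul2; ring. Qed.

Lemma binz2M u v : binz2 (u * v) = u ^+ 2 * binz2 v + v * binz2 u.
Proof. by apply: binz2_eq; rewrite mulrDl -!mulrA !binz2_mul2; ring. Qed.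

Lemma binz2N u : binz2 (- u) = binz2 u + u.
Proof. by apply: binz2_eq; rewrite mulrDl binz2_mul2; ring. Qed.

Lemma binz2D1 u : binz2 (u + 1) = binz2 u + u.
Proof. by apply: binz2_eq; rewrite mulrDl binz2_mul2; ring. Qed.

Lemma binz2_N1 u : binz2 (- u + 1) = binz2 u.
Proof. by apply: binz2_eq; rewrite binz2_mul2; ring. Qed.

Lemma binz2_mod (N u v : int) :
  (u = v %[mod N * 2])%Z -> (binz2 u = binz2 v %[mod N])%Z.
Proof.
move/eqP; rewrite eqz_mod_dvd => /dvdzP [k uv].
have -> : u = v + N * 2 * k by rewrite [N * 2 * k]mulrC -uv; ring.
apply/eqP; rewrite eqz_mod_dvd; apply/dvdzP.
exists (k * (N * 2 * k - 1) + 2 * v * k); rewrite binz2D.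
have -> : binz2 (N * 2 * k) = N * k * (N * 2 * k - 1) by apply: binz2_eq; ring.
ring.
Qed.

Lemma halfz_predK (x M : int) : coprimez x (M * 2) -> x = halfz_pred x * 2 + 1.
Proof.
move=> coprime_x2.
have x_eq := divz_eq x 2%Z.
have [x_even | x_odd] : (x %% 2)%Z = 0 \/ (x %% 2)%Z = 1 by lia.
- have : (2 %| gcdz x (M * 2))%Z.
    by rewrite dvdz_gcd; apply/andP; split; apply/dvdzP;
      [exists (x %/ 2)%Z; rewrite {1}x_eq x_even addr0 | exists M].
  by rewrite (eqP coprime_x2).
- by rewrite x_odd in x_eq; rewrite /halfz_pred {2}x_eq addrK mulzK.
Qed.

Lemma binz2_odd (x : int) : x = halfz_pred x * 2 + 1 -> binz2 x = x * halfz_pred x.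
Proof. by move=> x_odd; apply: binz2_eq; move: (halfz_pred x) x_odd => hx ->; ring. Qed.

Lemma intr_Zp_eq0 (p : nat) (z : int) : ((z%:~R : 'Z_p.+2) == 0) = ((p.+2)%:Z %| z)%Z.
Proof.
have p_gt1 : (1 < p.+2)%N by [].
case: z => m; rewrite dvdzE /= ?oppr_eq0 /dvdn -(inj_eq val_inj) /=;
  by rewrite (val_Zp_nat p_gt1).
Qed.

Lemma intr_ZpP (p : nat) (x y : int) :
  ((x%:~R : 'Z_p.+2) = y%:~R) <-> (x = y %[mod (p.+2)%:Z])%Z.
Proof.
split=> [xy | /eqP xy]; first by apply/eqP; rewrite eqz_mod_dvd -intr_Zp_eq0 intrB xy subrr.
by apply/eqP; move: xy; rewrite eqz_mod_dvd -intr_Zp_eq0 intrB subr_eq0.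
Qed.

Lemma eq_by_relation {R : pzRingType} (u v k : R) [l r : R] :
  l = r -> u - v = k * (l - r) -> u = v.
Proof. by move=> <- uv; apply/eqP; rewrite -subr_eq0 uv subrr mulr0. Qed.

Lemma zeqS (z w : zhat) :
  (forall p : nat, (z p.+1 = w p.+1 %[mod (p.+2)%:Z])%Z) -> zeq z w.
Proof. by move=> zw [|p]; [rewrite !modz1 | exact: zw]. Qed.

Lemma double_level_modulus (n : nat) : ((2 * n + 1).+1)%:Z = (n.+1)%:Z * 2.
Proof. lia. Qed.

Lemma zhat_valid_double (z : zhat) (n : nat) :
  zhat_valid z -> (z (2 * n + 1)%N = z n %[mod (n.+1)%:Z])%Z.
Proof.
by move=> z_valid; apply: z_valid; apply/dvdnP; exists 2%N; lia.
Qed.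

Lemma zbinom2E (z : zhat) (n : nat) : zbinom2 z n = binz2 (z (2 * n + 1)%N).
Proof. by []. Qed.

Lemma zhalf_predE (z : zhat) (n : nat) : zhalf_pred z n = halfz_pred (z (2 * n + 1)%N).
Proof. by []. Qed.

Arguments zbinom2 : simpl never.
Arguments zhalf_pred : simpl never.

Lemma zunit_double_odd (u : zhat) (n : nat) :
  zunit u -> u (2 * n + 1)%N = halfz_pred (u (2 * n + 1)%N) * 2 + 1.
Proof. by move=> /(_ (2 * n + 1)%N); rewrite double_level_modulus; exact: halfz_predK. Qed.

Definition copp {G : Type} (u : G -> zhat) : G -> zhat := fun g => zopp (u g).

Section ContinuousCochains.
Variable G : topologicalType.
Implicit Types u w : G -> zhat.

Lemma cochain1M u w : cochain1 u -> cochain1 w -> cochain1 (cmul u w).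
Proof.
move=> [uV uC] [wV wC]; split=> [g m n mn | n g].
  by rewrite /cmul /zmul -modzMm uV // wV // modzMm.
apply: filterS2 (uC n g) (wC n g) => g' ug wg.
by rewrite /cmul /zmul -modzMm ug wg modzMm.
Qed.

Lemma cochain1N u : cochain1 u -> cochain1 (copp u).
Proof.
move=> [uV uC]; split=> [g m n mn | n g].
  by rewrite /copp /zopp -modzNm uV // modzNm.
by apply: filterS (uC n g) => g' ug; rewrite /copp /zopp -modzNm ug modzNm.
Qed.

Lemma cochain1B u w : cochain1 u -> cochain1 w -> cochain1 (csub u w).
Proof.
move=> [uV uC] [wV wC]; split=> [g m n mn | n g].
  by rewrite /csub /zsub -modzDm -modzNm uV // wV // modzNm modzDm.
apply: filterS2 (uC n g) (wC n g) => g' ug wg.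
by rewrite /csub /zsub -modzDm -modzNm ug wg modzNm modzDm.
Qed.

Lemma cochain1_binom2 u : cochain1 u -> cochain1 (cbinom2 u).
Proof.
move=> [uV uC]; split=> [g m n mn | n g].
  rewrite /cbinom2 !zbinom2E; apply: binz2_mod; rewrite -double_level_modulus.
  by apply: uV; move: mn => /dvdnP [k nk]; apply/dvdnP; exists k; nia.
apply: filterS (uC (2 * n + 1)%N g) => g' ug.
by rewrite /cbinom2 !zbinom2E; apply: binz2_mod; rewrite -double_level_modulus.
Qed.

End ContinuousCochains.

Section ConnectingMap.
Variables (G : topologicalType) (gmul : G -> G -> G) (chi f b a c : G -> zhat).
Hypotheses (chi_valid : forall g, zhat_valid (chi g)) (chi_unit : forall g, zunit (chi g))
  (b_valid : forall g, zhat_valid (b g)) (a_valid : forall g, zhat_valid (a g))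
  (p_cocycle : is_pi3_cocycle gmul chi f b a c).

Lemma delta_xyx_cobound g h :
  zeq (delta_xyx gmul chi f b a c g h)
      (zadd (cadd2 (copp2 (cup chi 2 (cadd b (chalf chi)) c))
                   (copp2 (cup chi 1 (cbinom2 b) a)) g h)
            (cobound gmul chi 3 (cmul (copp b) c) g h)).
Proof.
have [Ea Eb Ec] := p_cocycle g h; apply: zeqS => p; set n := p.+1.
have x_odd := zunit_double_odd _ n (chi_unit g).
have x_n := zhat_valid_double _ n (chi_valid g).
have bg_n := zhat_valid_double _ n (b_valid g).
have Bg2 := binz2_mul2 (b g (2 * n + 1)%N).
move: (Ea n) (Eb n) (Ec n) (Eb (2 * n + 1)%N).
rewrite /delta_xyx /delta_full /act4 /cadd2 /copp2 /cup /cadd /chalf /cbinom2 /cmul /copp.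
rewrite /cobound /twist /= /zadd /zmul /zsub /zopp /zexp /zero5 /zconst /=.
rewrite !zbinom2E !zhalf_predE /= ?(add0r, addr0, mul0r, mulr0, subr0, sub0r, oppr0).
rewrite double_level_modulus binz2N (binz2_odd _ x_odd).
move=> a_gh b_gh c_gh /binz2_mod binz2_bgh.
move: (binz2 (b g _)) (binz2 (b (gmul g h) _)) (binz2 (_ + _)) (halfz_pred _) Bg2 binz2_bgh x_odd.
move=> Bg Bgh Bgh' hx Bg2 binz2_bgh x_odd.
apply/intr_ZpP.
move: a_gh b_gh c_gh binz2_bgh x_n bg_n => /intr_ZpP a_gh /intr_ZpP b_gh /intr_ZpP c_gh.
move=> /intr_ZpP binz2_bgh /intr_ZpP x_n /intr_ZpP bg_n.
move: Bg2 x_odd => /(congr1 (fun z : int => z%:~R : 'Z_p.+2)) Bg2.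
move=> /(congr1 (fun z : int => z%:~R : 'Z_p.+2)) x_odd.
rewrite !(intrD, intrM, intrN, intrB, rmorphXn) /= in a_gh b_gh c_gh Bg2 x_odd *.
rewrite binz2_bgh a_gh b_gh c_gh -x_n x_odd; rewrite bg_n in Bg2.
apply: (eq_by_relation _ _ ((a h n)%:~R * (hx%:~R * 2 + 1)) Bg2).
ring.
Qed.

Lemma delta_xyy_cobound g h :
  zeq (delta_xyy gmul chi f b a c g h)
      (zadd (cadd2 (cadd2 (cup chi 2 (cadd a (chalf chi)) (csub (cmul a b) c))
                          (cup chi 1 (cbinom2 a) b))
                   (copp2 (cup chi 1 f a)) g h)
            (cobound gmul chi 3 (csub (cmul b (cbinom2 a)) (cmul a c)) g h)).
Proof.
have [Ea Eb Ec] := p_cocycle g h; apply: zeqS => p; set n := p.+1.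
have x_odd := zunit_double_odd _ n (chi_unit g).
have x_n := zhat_valid_double _ n (chi_valid g).
have ag_n := zhat_valid_double _ n (a_valid g).
have ah_n := zhat_valid_double _ n (a_valid h).
have Ah2 := binz2_mul2 (a h (2 * n + 1)%N).
move: (Ea n) (Eb n) (Ec n) (Ea (2 * n + 1)%N).
rewrite /delta_xyy /delta_full /act4 /cadd2 /copp2 /cup /cadd /chalf /cbinom2 /csub /cmul.
rewrite /cobound /twist /= /zadd /zmul /zsub /zopp /zexp /zero5 /zconst /=.
rewrite !zbinom2E !zhalf_predE /= ?(add0r, addr0, mul0r, mulr0, subr0, sub0r, oppr0).
rewrite !binz2_N1 !binz2D1 binz2M (binz2_odd _ x_odd) double_level_modulus.
move=> a_gh b_gh c_gh /binz2_mod; rewrite binz2D binz2M (binz2_odd _ x_odd) => binz2_agh.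
move: (binz2 (a g _)) (binz2 (a h _)) (binz2 (a (gmul g h) _)) (halfz_pred _) Ah2 binz2_agh x_odd.
move=> Ag Ah Agh hx Ah2 binz2_agh x_odd.
apply/intr_ZpP.
move: a_gh b_gh c_gh binz2_agh x_n ag_n ah_n => /intr_ZpP a_gh /intr_ZpP b_gh /intr_ZpP c_gh.
move=> /intr_ZpP binz2_agh /intr_ZpP x_n /intr_ZpP ag_n /intr_ZpP ah_n.
move: Ah2 x_odd => /(congr1 (fun z : int => z%:~R : 'Z_p.+2)) Ah2.
move=> /(congr1 (fun z : int => z%:~R : 'Z_p.+2)) x_odd.
rewrite !(intrD, intrM, intrN, intrB, rmorphXn) /= in a_gh b_gh c_gh binz2_agh Ah2 x_odd *.
rewrite binz2_agh a_gh b_gh c_gh ag_n ah_n -x_n x_odd; rewrite ah_n in Ah2.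
apply: (eq_by_relation _ _
  ((b g n)%:~R * (hx%:~R * 2 + 1) - (b h n)%:~R * hx%:~R * (hx%:~R * 2 + 1) ^+ 2) Ah2).
ring.
Qed.
End ConnectingMap.

Theorem proposition12p3
  (G : topologicalType) (gmul : G -> G -> G) (ginv : G -> G) (g1 : G)
  (chi f b a c : G -> zhat) :
  is_profinite_group gmul ginv g1 ->
  is_character gmul chi ->
  cocycle1 gmul chi 2 f ->
  cochain1 b -> cochain1 a -> cochain1 c ->
  is_pi3_cocycle gmul chi f b a c ->
  cohomologous2 gmul chi 3
    (delta_xyx gmul chi f b a c)
    (cadd2 (copp2 (cup chi 2 (cadd b (chalf chi)) c))
           (copp2 (cup chi 1 (cbinom2 b) a)))
  /\
  cohomologous2 gmul chi 3
    (delta_xyy gmul chi f b a c)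
    (cadd2 (cadd2 (cup chi 2 (cadd a (chalf chi)) (csub (cmul a b) c))
                  (cup chi 1 (cbinom2 a) b))
           (copp2 (cup chi 1 f a))).
Proof.
move=> _ [[chi_valid _] chi_unit _] _ b_cochain a_cochain c_cochain p_cocycle.
have [b_valid _] := b_cochain; have [a_valid _] := a_cochain.
split.
- exists (cmul (copp b) c); split; first by apply: cochain1M => //; apply: cochain1N.
  exact: delta_xyx_cobound.
- exists (csub (cmul b (cbinom2 a)) (cmul a c)); split.
    by apply: cochain1B; apply: cochain1M => //; apply: cochain1_binom2.
  exact: delta_xyy_cobound.
Qed.
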